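(* Let $p$ and $q$ be odd primes and let $h \geq 1$ be an odd integer. Suppose $r, s$ are rational numbers with $2r, 2s \in \mathbb{Z}$, $2r \not\equiv 0 \pmod q$, $2s \not\equiv 0 \pmod q$, and $r^2 - p s^2 = q^h$. Define the rational number $S$ by $(r + s\sqrt{p})^h - (r - s\sqrt{p})^h = 2 S \sqrt{p}$. Then $\left(\frac{S}{q}\right) = \left(\frac{s}{q}\right)$.
   Context: $\left(\frac{\cdot}{q}\right)$ is the Legendre symbol modulo $q$; for a rational number whose denominator is a power of $2$ (such as $s$ and $S$), it is evaluated on its reduction modulo $q$ (using that $2$ is invertible modulo $q$). *)

From mathcomp Require Import all_boot all_order all_algebra.
Set Implicit Arguments. Unset Strict Implicit. Unset Printing Implicit Defensive.
Import Order.TTheory GRing.Theory Num.Theory.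
Local Open Scope ring_scope.

Definition legendre (q : nat) (a : int) : int :=
  if (q%:Z %| a)%Z then 0
  else if [exists x : 'I_q, (q%:Z %| (x%:Z) ^+ 2 - a)%Z] then 1 else -1.

(* Reduction modulo q of a rational x whose denominator is invertible mod q:
   numq x times an integer inverse of denq x modulo q (Bezout coefficient). *)
Definition rat_modq (q : nat) (x : rat) : int :=
  numq x * (egcdz (denq x) q%:Z).1.

Definition legendre_rat (q : nat) (x : rat) : int := legendre q (rat_modq q x).

From mathcomp Require Import all_boot all_order all_algebra.
From mathcomp Require Import ring.
Set Implicit Arguments. Unset Strict Implicit. Unset Printing Implicit Defensive.
Import Order.TTheory GRing.Theory Num.Theory.
Local Open Scope ring_scope.

(* Put a = 2r and b = 2s, and write (a + b sqrt p)^n = X_n + Y_n sqrt p with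
   integers X_n, Y_n.  The hypothesis on S says Y_h = 2^h S.  Since
   a^2 - p b^2 = 4 q^h, we have a^2 = p b^2 mod q, and under this relation the
   recurrence for (X_n, Y_n) collapses to Y_h = (2a)^(h-1) b mod q.  Hence
   S = a^(h-1) s mod q, where h - 1 is even and q does not divide a, so S and s
   differ by a nonzero square factor modulo q. *)

Fixpoint quad_pow (R : pzRingType) (P a b : R) (n : nat) : R * R :=
  if n is n'.+1 then
    let: (x, y) := quad_pow P a b n' in (a * x + P * b * y, b * x + a * y)
  else (1, 0).

Section QuadPow.
Variable R : comPzRingType.
Implicit Types P a b t : R.

Lemma quad_powS P a b n : quad_pow P a b n.+1 =
  (a * (quad_pow P a b n).1 + P * b * (quad_pow P a b n).2,
   b * (quad_pow P a b n).1 + a * (quad_pow P a b n).2).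
Proof. by rewrite /=; case: quad_pow. Qed.

Lemma quad_powE P a b t n : t ^+ 2 = P ->
  (a + b * t) ^+ n = (quad_pow P a b n).1 + (quad_pow P a b n).2 * t /\
  (a - b * t) ^+ n = (quad_pow P a b n).1 - (quad_pow P a b n).2 * t.
Proof.
move=> tP; elim: n => [|n [IH1 IH2]]; first by rewrite !expr0 /= mul0r addr0 subr0.
by rewrite exprS [(a - _) ^+ _]exprS IH1 IH2 quad_powS /= -tP; split; ring.
Qed.

Lemma quad_pow_conj_diff P a b t n : t ^+ 2 = P ->
  (a + b * t) ^+ n - (a - b * t) ^+ n = 2 * (quad_pow P a b n).2 * t.
Proof. by move=> tP; have [-> ->] := quad_powE a b n tP; ring. Qed.

Lemma quad_pow_degenerate P a b n : a ^+ 2 = P * b ^+ 2 ->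
  quad_pow P a b n.+1 = ((2 * a) ^+ n * a, (2 * a) ^+ n * b).
Proof.
move=> ab; elim: n => [|n IHn]; first by rewrite quad_powS /=; congr (_, _); ring.
rewrite quad_powS IHn /= [(2 * a) ^+ n.+1]exprS; congr (_, _); last by ring.
transitivity ((2 * a) ^+ n * (a ^+ 2 + P * b ^+ 2)); first by ring.
by rewrite -ab; ring.
Qed.

End QuadPow.

Lemma rmorph_quad_pow (R S : comPzRingType) (f : {rmorphism R -> S}) P a b n :
  quad_pow (f P) (f a) (f b) n = (f (quad_pow P a b n).1, f (quad_pow P a b n).2).
Proof.
elim: n => [|n IHn]; first by rewrite /= rmorph1 rmorph0.
by rewrite !quad_powS IHn /= !rmorphD !rmorphM.
Qed.

Definition legendreF (F : finFieldType) (v : F) : int :=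
  if v == 0 then 0 else if [exists y : F, y ^+ 2 == v] then 1 else -1.

Lemma legendreF_sqrM (F : finFieldType) (c v : F) :
  c != 0 -> legendreF (c ^+ 2 * v) = legendreF v.
Proof.
move=> c0; rewrite /legendreF mulf_eq0 expf_eq0 (negbTE c0) andbF /=.
case: ifP => // _; congr (if _ then _ else _).
apply/existsP/existsP => -[y /eqP yv]; last by exists (c * y); rewrite exprMn yv.
by exists (y / c); rewrite expr_div_n yv mulrC mulKf ?expf_neq0.
Qed.

Section LegendreModq.
Variable q : nat.
Hypothesis q_pr : prime q.

Let dvdz_Fq := dvdz_pcharf (pchar_Fp q_pr).

Lemma legendre_Fp (a : int) : legendre q a = legendreF (a%:~R : 'F_q).
Proof.
rewrite /legendre /legendreF dvdz_Fq; case: ifP => // _.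
congr (if _ then _ else _); apply/existsP/existsP => -[x].
  by rewrite dvdz_Fq rmorphB rmorphXn subr_eq0 => xa; exists x%:R.
have x_lt_q : (val x < q)%N by rewrite -[X in (_ < X)%N](Fp_cast q_pr) ltn_ord.
move=> xa; exists (Ordinal x_lt_q).
by rewrite dvdz_Fq rmorphB rmorphXn subr_eq0 /= -pmulrn natr_Zp.
Qed.

Lemma rat_modq_den (x : rat) : (denq x)%:~R != 0 :> 'F_q ->
  (rat_modq q x)%:~R * (denq x)%:~R = (numq x)%:~R :> 'F_q.
Proof.
move=> den0; rewrite /rat_modq; case: egcdzP => u v /= uv _.
have co_den_q : coprimez (denq x) q.
  by rewrite coprimezE coprime_sym prime_coprime // -dvdzE dvdz_Fq.
have q0 : q%:~R = 0 :> 'F_q by apply/eqP; rewrite -dvdz_Fq dvdzz.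
have u_den : u%:~R * (denq x)%:~R = 1 :> 'F_q.
  have : (u * denq x + v * q)%:~R = 1 :> 'F_q by rewrite uv (eqP co_den_q).
  by rewrite intrD !intrM q0 mulr0 addr0.
by rewrite rmorphM -mulrA u_den mulr1.
Qed.

Lemma rat_modqM (x : rat) (d n : int) :
  x * d%:~R = n%:~R -> d%:~R != 0 :> 'F_q ->
  (rat_modq q x)%:~R * d%:~R = n%:~R :> 'F_q.
Proof.
move=> xdn d0.
have numd : numq x * d = n * denq x.
  by apply/eqP; rewrite -(eqr_int rat) !rmorphM /= numqE -xdn mulrAC.
have den_d : (denq x %| d)%Z.
  have co : coprimez (denq x) (numq x) by rewrite coprimezE coprime_sym coprime_num_den.
  by rewrite -(Gauss_dvdzr _ co) numd dvdz_mull.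
have den0 : (denq x)%:~R != 0 :> 'F_q.
  by apply: contra d0; rewrite -!dvdz_Fq => /dvdz_trans; apply.
by apply: (mulIf den0); rewrite mulrAC rat_modq_den // -!intrM numd.
Qed.
End LegendreModq.

Lemma conj_pow_imag_int (R : numFieldType) (t : R) (P : int) (r s S : rat)
    (a b : int) n :
  t ^+ 2 = P%:~R -> t != 0 -> 2 * r = a%:~R -> 2 * s = b%:~R ->
  (ratr r + ratr s * t) ^+ n - (ratr r - ratr s * t) ^+ n = 2 * ratr S * t ->
  S * (2 ^+ n)%:~R = (quad_pow P a b n).2%:~R.
Proof.
move=> tP t0 ra sb rsS.
have := quad_pow_conj_diff (a%:~R) (b%:~R) n tP.
rewrite (rmorph_quad_pow (intmul 1)) /=.
have [-> ->] : a%:~R = 2 * ratr r :> R /\ b%:~R = 2 * ratr s :> R.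
  by rewrite -!(ratr_int R) -ra -sb !rmorphM /= rmorph_nat.
have -> : 2 * ratr r + 2 * ratr s * t = 2 * (ratr r + ratr s * t) :> R by ring.
have -> : 2 * ratr r - 2 * ratr s * t = 2 * (ratr r - ratr s * t) :> R by ring.
rewrite !exprMn -mulrBr rsS => YS.
have two0 : 2 != 0 :> R by rewrite pnatr_eq0.
apply: (fmorph_inj (ratr : rat -> R)); rewrite rmorphM /= !ratr_int rmorphXn /=.
apply: (mulIf t0); apply: (mulfI two0); rewrite -pmulrn [RHS]mulrA -YS; ring.
Qed.

Theorem lemma5 (R : rcfType) (p q h : nat) (r s S : rat) (a b : int) :
  prime p -> odd p -> prime q -> odd q -> odd h -> (1 <= h)%N ->
  2 * r = a%:~R -> 2 * s = b%:~R ->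
  ~~ (q%:Z %| a)%Z -> ~~ (q%:Z %| b)%Z ->
  r ^+ 2 - p%:R * s ^+ 2 = q%:R ^+ h ->
  (ratr r + ratr s * Num.sqrt (p%:R : R)) ^+ h
    - (ratr r - ratr s * Num.sqrt (p%:R : R)) ^+ h
    = 2 * ratr S * Num.sqrt (p%:R : R) ->
  legendre_rat q S = legendre_rat q s.
Proof.
move=> p_pr _ q_pr q_odd h_odd _ ra sb qa _ norm_rs conj_diff.
have tP : Num.sqrt (p%:R : R) ^+ 2 = (p%:Z)%:~R by rewrite sqr_sqrtr ?ler0n.
have t0 : Num.sqrt (p%:R : R) != 0 by rewrite sqrtr_eq0 -ltNge ltr0n prime_gt0.
have YS := conj_pow_imag_int tP t0 ra sb conj_diff.
set k := h./2; have hE : h = (k * 2).+1 by rewrite muln2 -[LHS]odd_double_half h_odd.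
have dvdz_Fq := dvdz_pcharf (pchar_Fp q_pr).
have two0 : 2 != 0 :> 'F_q.
  by rewrite -(dvdn_pcharf (pchar_Fp q_pr)) dvdn_prime2 //; apply: contraTneq q_odd => ->.
have norm_ab : a ^+ 2 - p%:Z * b ^+ 2 = 4 * q%:Z ^+ h.
  apply: (@intr_inj rat); rewrite !rmorphB !rmorphM !rmorphXn /= -ra -sb -norm_rs.
  by rewrite -!pmulrn; ring.
have ab : (a%:~R : 'F_q) ^+ 2 = p%:~R * b%:~R ^+ 2.
  have : (q%:Z %| a ^+ 2 - p%:Z * b ^+ 2)%Z.
    by rewrite norm_ab hE exprS dvdz_mull // dvdz_mulr.
  by rewrite dvdz_Fq rmorphB rmorphXn rmorphM rmorphXn subr_eq0 => /eqP.
have Yq : (quad_pow p%:Z a b h).2%:~R = (2 * a%:~R) ^+ (k * 2) * b%:~R :> 'F_q.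
  have := congr1 snd (quad_pow_degenerate (k * 2) ab).
  by rewrite (rmorph_quad_pow (intmul 1)) -hE.
have sq : (rat_modq q s)%:~R * 2 = b%:~R :> 'F_q.
  by apply: (rat_modqM q_pr (d := 2)); rewrite // mulrC.
have Sq := rat_modqM q_pr YS; rewrite rmorphXn Yq in Sq.
have Ss : (rat_modq q S)%:~R = (a%:~R ^+ k) ^+ 2 * (rat_modq q s)%:~R :> 'F_q.
  apply: (mulIf (expf_neq0 h two0)); rewrite Sq ?expf_neq0 // -sq hE.
  by rewrite [2 ^+ _.+1]exprS !exprM exprMn; ring.
by rewrite /legendre_rat !(legendre_Fp q_pr) Ss legendreF_sqrM // expf_neq0 // -dvdz_Fq.
Qed.
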